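(* Let $R$ be a commutative domain, $B=R(t,\sigma,H,J)$, assume $\sigma^n=\mathrm{id}_R$ and let $\mathcal O$ be a $\sigma$-orbit in $\operatorname{Maxspec}(R)$ of size $n$ containing at least one break. Let $M$ be a simple $B$-module which is an $R$-weight module with $\operatorname{Supp}_R(M)\subseteq\mathcal O$, and let $\mathfrak m\in\mathcal O$ be a break. Then $\mathfrak m$ is not both a $J$-break and an $H$-break for $M$. If $\mathfrak m$ is a $J$-break (resp. $H$-break) for $M$, then every break in $\mathcal O$ is a $J$-break (resp. $H$-break) for $M$, and $\operatorname{Supp}_R(M)=\mathcal O$.
   Context: $\Bbbk$ is a field; all algebras are associative unital $\Bbbk$-algebras. For an algebra $R$ and $\sigma\in\operatorname{Aut}_\Bbbk(R)$, $R[t,t^{-1};\sigma]$ is the skew Laurent ring: generated over $R$ by $t,t^{-1}$ with $tt^{-1}=t^{-1}t=1$ and $t^{\pm1}r=\sigma^{\pm1}(r)t^{\pm1}$ for $r\in R$. Given two-sided ideals $H,J$ of $R$, set $I^{(0)}=R$, $I^{(n)}=J\sigma(J)\cdots\sigma^{n-1}(J)$ for $n\ge1$, and $I^{(n)}=\sigma^{-1}(H)\sigma^{-2}(H)\cdots\sigma^{n}(H)$ for $n\le-1$; it is assumed throughout that $I^{(n)}\neq0$ for all $n\in\mathbb Z$. The Bell–Rogalski (BR) algebra is $R(t,\sigma,H,J)=\bigoplus_{n\in\mathbb Z}I^{(n)}t^n\subseteq R[t,t^{-1};\sigma]$. For $R$ commutative, $\mathcal S(B)=\{\mathfrak p\in\operatorname{Spec}(R):\mathfrak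 p\supseteq HJ\}$; a maximal ideal $\mathfrak m$ is a break if $\sigma(\mathfrak m)\in\mathcal S(B)$. A left $B$-module $M$ is an $R$-weight module if $M=\bigoplus_{\mathfrak m}M_{\mathfrak m}$, $M_{\mathfrak m}=\{v:\mathfrak mv=0\}$, each $\dim_{R/\mathfrak m}M_{\mathfrak m}<\infty$; $\operatorname{Supp}_R(M)=\{\mathfrak m:M_{\mathfrak m}\ne0\}$. $\sigma$-orbits are orbits of $k\cdot\mathfrak m=\sigma^k(\mathfrak m)$. For a weight module $M$ and a break $\mathfrak m$: $\mathfrak m$ is a $J$-break for $M$ if there exist $j\in J$ and $v\in M_{\mathfrak m}$ with $(jt)v\neq0$; $\mathfrak m$ is an $H$-break for $M$ if there exist $h\in H$ and $w\in M_{\sigma(\mathfrak m)}$ with $(\sigma^{-1}(h)t^{-1})w\neq0$. *)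

From HB Require Import structures.
From mathcomp Require Import all_boot all_order all_algebra.
Set Implicit Arguments. Unset Strict Implicit. Unset Printing Implicit Defensive.
Import Order.TTheory GRing.Theory Num.Theory.
Local Open Scope ring_scope.

Section BR.
Variable R : comNzRingType.

Definition seteq (A B : R -> Prop) := forall x, A x <-> B x.
Definition subset_of (A B : R -> Prop) := forall x, A x -> B x.

Definition is_ideal (I : R -> Prop) :=
  [/\ I 0, (forall x y, I x -> I y -> I (x + y)) & (forall r x, I x -> I (r * x))].

Definition maximal_ideal (m : R -> Prop) :=
  [/\ is_ideal m, ~ m 1 &
      forall I, is_ideal I -> subset_of m I -> seteq I m \/ I 1].

Definition prime_ideal (p : R -> Prop) :=
  [/\ is_ideal p, ~ p 1 & forall a b, p (a * b) -> p a \/ p b].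

Definition idealprod (A B : R -> Prop) : R -> Prop := fun x =>
  exists (k : nat) (a b : nat -> R),
    (forall i, (i < k)%N -> A (a i) /\ B (b i)) /\ x = \sum_(i < k) a i * b i.

Variables (s si : R -> R).  (* sigma and its inverse *)

Definition spow (z : int) (x : R) : R :=
  match z with Posz n => iter n s x | Negz n => iter n.+1 si x end.

(* image of a subset under sigma^z, i.e. preimage under sigma^(-z) *)
Definition simg (z : int) (I : R -> Prop) : R -> Prop := fun x => I (spow (- z) x).

Variables (H J : R -> Prop).

(* I^(n) for n >= 0 : J sigma(J) ... sigma^(n-1)(J) *)
Fixpoint Ipos (n : nat) : R -> Prop :=
  match n with
  | 0 => fun _ => True
  | 1 => J
  | k.+1 => idealprod (Ipos k) (fun x => J (iter k si x))
  end.

(* I^(-n) for n >= 1 : sigma^-1(H) sigma^-2(H) ... sigma^-n(H) *)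
Fixpoint Ineg (n : nat) : R -> Prop :=
  match n with
  | 0 => fun _ => True
  | 1 => fun x => H (s x)
  | k.+1 => idealprod (Ineg k) (fun x => H (iter k.+1 s x))
  end.

Definition Iz (z : int) : R -> Prop :=
  match z with Posz n => Ipos n | Negz n => Ineg n.+1 end.

Definition in_SB (p : R -> Prop) := prime_ideal p /\ subset_of (idealprod H J) p.
Definition is_break (m : R -> Prop) := maximal_ideal m /\ in_SB (simg 1 m).

Definition in_sorbit (m0 m : R -> Prop) := exists k : int, seteq m (simg k m0).

Variable M : zmodType.
(* A left B-module structure on M, B = R(t,sigma,H,J) = (+)_n I^(n) t^n,
   given by the action rho n a of the homogeneous element a t^n (a in I^(n)),
   extended additively. *)
Variable rho : int -> R -> M -> M.

Definition is_BR_module :=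
  [/\ (forall n a v w, Iz n a -> rho n a (v + w) = rho n a v + rho n a w),
      (forall n a b v, Iz n a -> Iz n b -> rho n (a + b) v = rho n a v + rho n b v),
      (forall v, rho 0 1 v = v) &
      (forall m n a b v, Iz m a -> Iz n b ->
          rho m a (rho n b v) = rho (m + n) (a * spow m b) v)].

Definition submodule (N : M -> Prop) :=
  [/\ N 0, (forall v w, N v -> N w -> N (v + w)), (forall v, N v -> N (- v)) &
      (forall n a v, Iz n a -> N v -> N (rho n a v))].

Definition simple_module :=
  (exists v : M, v != 0) /\
  forall N, submodule N -> (forall v, N v -> v = 0) \/ (forall v, N v).

Definition wt (m : R -> Prop) (v : M) := forall r, m r -> rho 0 r v = 0.

Definition weight_module :=
  [/\
      (forall v, exists (k : nat) (ms : nat -> R -> Prop) (vs : nat -> M),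
         (forall i, (i < k)%N -> maximal_ideal (ms i) /\ wt (ms i) (vs i)) /\
         v = \sum_(i < k) vs i),
      (forall (k : nat) (ms : nat -> R -> Prop) (vs : nat -> M),
         (forall i, (i < k)%N -> maximal_ideal (ms i) /\ wt (ms i) (vs i)) ->
         (forall i j, (i < k)%N -> (j < k)%N -> seteq (ms i) (ms j) -> i = j) ->
         \sum_(i < k) vs i = 0 -> forall i, (i < k)%N -> vs i = 0) &
      (* each M_m is finite-dimensional over R/m *)
      (forall m, maximal_ideal m -> exists (k : nat) (e : nat -> M),
         (forall i, (i < k)%N -> wt m (e i)) /\
         forall v, wt m v -> exists c : nat -> R, v = \sum_(i < k) rho 0 (c i) (e i))].

Definition in_supp (m : R -> Prop) := maximal_ideal m /\ exists v, wt m v /\ v != 0.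

Definition J_break (m : R -> Prop) :=
  exists j v, J j /\ wt m v /\ rho 1 j v != 0.

(* m is an H-break for M : (sigma^-1(h) t^-1) w <> 0 with w in M_{sigma(m)} *)
Definition H_break (m : R -> Prop) :=
  exists h w, H h /\ wt (simg 1 m) w /\ rho (-1) (si h) w != 0.

End BR.

(* Suppose (jt)v <> 0 for some j in J and some v in M_m.  By simplicity M is spanned by the
   chains (j_k t)...(j_1 t)v', k >= 1, v' in M_m: this span is stable under sigma^-1(H)t^-1
   because (sigma^-1(h)t^-1)(jt) = sigma^-1(hj) lies in m, m being a break, and so kills
   M_m.  A chain of length k has weight sigma^k(m), which differs from m for 0 < k < n.
   Localizing at m, M_m would vanish if all chains of some length L <= n vanished; hence
   some chain of every length k <= n is nonzero, which makes every point of the orbit a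
   J-break and puts it in the support.  The same localization shows that sigma^-1(H)t^-1
   kills M_sigma(m), so m is not also an H-break.  The H-break case is symmetric: raise
   with sigma^-1(H)t^-1 starting from sigma(m). *)

From Pilot Require Import Defs.
From HB Require Import structures.
From mathcomp Require Import all_boot all_order all_algebra.
From mathcomp Require Import zify ring.
From Stdlib Require Import Classical.
Set Implicit Arguments.
Unset Strict Implicit.
Unset Printing Implicit Defensive.
Import GRing.Theory.
Local Open Scope ring_scope.

Section Ideals.
Variable R : comNzRingType.
Implicit Types (p q I A B : R -> Prop).

Lemma idealN I x : is_ideal I -> I x -> I (- x).
Proof. by case=> _ _ IM Ix; rewrite -mulN1r; apply: IM. Qed.

Lemma maximal_seteq p q : seteq p q -> maximal_ideal p -> maximal_ideal q.
Proof.
move=> pq [[p0 pD pM] p1 pmax]; split.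
- split=> [|x y|r x]; rewrite -?pq; [exact: p0 | exact: pD | exact: pM].
- by rewrite -pq.
- move=> I Iideal qI; have [Ip|I1] := pmax I Iideal (fun x => qI x \o (pq x).1).
    by left=> x; rewrite Ip pq.
  by right.
Qed.

Lemma maximal_comaximal p q : maximal_ideal p -> maximal_ideal q -> ~ seteq p q ->
  exists a b, [/\ p a, q b & a + b = 1].
Proof.
move=> [[p0 pD pM] p1 pmax] [[q0 qD qM] _ qmax] npq.
pose K x := exists a b, [/\ p a, q b & x = a + b].
have Kideal : is_ideal K.
  split=> [|x y|r x].
  - by exists 0, 0; rewrite addr0.
  - move=> [a [b [pa qb ->]]] [a' [b' [pa' qb' ->]]].
    by exists (a + a'), (b + b'); rewrite addrACA; split; [exact: pD | exact: qD |].
  - move=> [a [b [pa qb ->]]]; exists (r * a), (r * b).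
    by rewrite mulrDr; split; [exact: pM | exact: qM |].
have pK : subset_of p K by move=> x px; exists x, 0; rewrite addr0.
have [Kp|[a [b [pa qb ab]]]] := pmax K Kideal pK; last by exists a, b.
have qp : subset_of q p by move=> x qx; apply/Kp; exists 0, x; rewrite add0r.
by have [pq|] := qmax p (And3 p0 pD pM) qp.
Qed.

Lemma maximal_preim (f : {rmorphism R -> R}) g p : cancel f g -> cancel g f ->
  maximal_ideal p -> maximal_ideal (fun x => p (f x)).
Proof.
move=> fK gK [[p0 pD pM] p1 pmax]; split.
- split=> [|x y px py|r x px]; rewrite ?rmorph0 ?rmorphD ?rmorphM //.
    exact: pD.
  exact: pM.
- by rewrite rmorph1.
- move=> I [I0 ID IM] sub.
  have gD x y : g (x + y) = g x + g y by apply: (canLR fK); rewrite rmorphD !gK.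
  have gM x y : g (x * y) = g x * g y by apply: (canLR fK); rewrite rmorphM !gK.
  have Ig : is_ideal (fun x => I (g x)).
    split=> [|x y Ix Iy|r x Ix]; first by rewrite -(rmorph0 f) fK.
      by rewrite gD; apply: ID.
    by rewrite gM; apply: IM.
  have [Ep|I1] := pmax _ Ig (fun x px => sub _ (eq_ind _ p px _ (esym (gK x)))).
    by left=> x; rewrite -Ep fK.
  by right; rewrite -(rmorph1 f) fK in I1.
Qed.

Lemma idealprod0 A B : idealprod A B 0.
Proof. by exists 0%N, (fun=> 0), (fun=> 0); rewrite big_ord0. Qed.

Lemma idealprodM A B a b : A a -> B b -> idealprod A B (a * b).
Proof. by exists 1%N, (fun=> a), (fun=> b); rewrite big_ord1; split=> // -[]. Qed.

Lemma idealprodD A B x y : idealprod A B x -> idealprod A B y -> idealprod A B (x + y).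
Proof.
move=> [k [a [b [ab ->]]]] [l [a' [b' [ab' ->]]]].
pose glue (c c' : nat -> R) i := if (i < k)%N then c i else c' (i - k)%N.
exists (k + l)%N, (glue a a'), (glue b b'); split.
  move=> i ikl; rewrite /glue; case: ltnP => [ik|ki]; first exact: ab.
  by apply: ab'; lia.
rewrite big_split_ord /glue; congr (_ + _); apply: eq_bigr => i _ /=.
  by rewrite ltn_ord.
by rewrite ltnNge leq_addr /= addKn.
Qed.

Lemma idealprod_ind A B (P : R -> Prop) : P 0 ->
  (forall x y, idealprod A B x -> idealprod A B y -> P x -> P y -> P (x + y)) ->
  (forall a b, A a -> B b -> P (a * b)) ->
  forall x, idealprod A B x -> P x.
Proof.
move=> P0 PD PM _ [k [a [b [ab ->]]]].
suff [] : idealprod A B (\sum_(i < k) a i * b i) /\ P (\sum_(i < k) a i * b i) by [].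
apply: (big_ind (fun x => idealprod A B x /\ P x)).
- by split; [exact: idealprod0 | exact: P0].
- by move=> x y [Ix Px] [Iy Py]; split; [exact: idealprodD | exact: PD].
- by move=> i _; have [Aa Bb] := ab i (ltn_ord i); split; [exact: idealprodM | exact: PM].
Qed.
End Ideals.

Lemma iter_can (T : Type) (f g : T -> T) k : cancel f g -> cancel (iter k f) (iter k g).
Proof. by move=> fK x; elim: k => // k IH; rewrite iterSr iterS fK. Qed.

Section Sigma.
Variables (R : comNzRingType) (s : {rmorphism R -> R}) (si : R -> R).
Hypotheses (s_si : cancel s si) (si_s : cancel si s).
Implicit Types (p q : R -> Prop).

HB.instance Definition _ := GRing.isZmodMorphism.Build R R si (can2_zmod_morphism s_si si_s).
HB.instance Definition _ := GRing.isMonoidMorphism.Build R R si (can2_monoid_morphism s_si si_s).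

Local Notation spow := (spow s si).
Local Notation simg := (simg s si).

Lemma spowK z : cancel (spow (- z)) (spow z).
Proof.
case: z => [[|k]|k] x //; [exact: (iter_can k.+1 si_s x) | exact: (iter_can k.+1 s_si x)].
Qed.

Lemma simgK z p : seteq (simg z (simg (- z) p)) p.
Proof. by move=> x; rewrite /simg opprK spowK. Qed.

Lemma simgNK z p : seteq (simg (- z) (simg z p)) p.
Proof. by move=> x; rewrite -{2}(opprK z); apply: simgK. Qed.

Lemma iter_simg_seteq z k p q : seteq p q -> seteq (iter k (simg z) p) (iter k (simg z) q).
Proof. by move=> pq; elim: k => //= k IH x; apply: IH. Qed.

Lemma iter_simgK z k p : seteq (iter k (simg z) (iter k (simg (- z)) p)) p.
Proof.
elim: k p => // k IH p x; rewrite [iter k.+1 (simg (- z)) p]iterSr.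
by apply: iff_trans (simgK z p x); apply: IH.
Qed.

Lemma iter_preim_maximal (f : {rmorphism R -> R}) g k p : cancel f g -> cancel g f ->
  maximal_ideal p -> maximal_ideal (fun x => p (iter k f x)).
Proof.
move=> fK gK; elim: k p => // k IH p pmax.
exact: IH _ (maximal_preim fK gK pmax).
Qed.

Lemma simg_maximal z p : maximal_ideal p -> maximal_ideal (simg z p).
Proof.
rewrite /simg; case: (- z) => k pmax; first exact: iter_preim_maximal s_si si_s pmax.
exact: (iter_preim_maximal k.+1 si_s s_si pmax).
Qed.

Lemma iter_simg_maximal z k p : maximal_ideal p -> maximal_ideal (iter k (simg z) p).
Proof. by move=> pmax; elim: k => //= k; apply: simg_maximal. Qed.

(* The break condition on [m], in the shapes of [base_absorbs] below for [d = 1, base = m]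
   and for [d = -1, base = sigma(m)]: [(sigma^-1(h)t^-1)(jt)] acts through an element of
   [m], and [(jt)(sigma^-1(h)t^-1)] through an element of [sigma(m)]. *)
Lemma break_absorbs_raise H J m h j : is_break s si H J m ->
  Iz s si H J (- 1) h -> Iz s si H J 1 j -> m (h * spow (- 1) j).
Proof.
case=> _ [_ HJm] Hh Jj.
have := HJm _ (idealprodM (A:=H) (B:=J) (a:=s h) Hh Jj).
by rewrite /Defs.simg /= rmorphM /= s_si.
Qed.

Lemma break_absorbs_lower H J m h j : is_break s si H J m ->
  Iz s si H J (- - 1) h -> Iz s si H J (- 1) j -> simg 1 m (h * spow (- - 1) j).
Proof.
case=> _ [_ HJm] Jh Hj; rewrite mulrC.
exact: HJm _ (idealprodM (A:=H) (B:=J) (a:=s j) Hj Jh).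
Qed.

End Sigma.

Arguments iter_simg_seteq {R s si z k p q}.

Section Orbit.
Variables (R : comNzRingType) (s : {rmorphism R -> R}) (si : R -> R).
Hypotheses (s_si : cancel s si) (si_s : cancel si s).
Variable n : nat.
Hypotheses (n_gt0 : (0 < n)%N) (sn : forall x, iter n s x = x).
Variable m0 : R -> Prop.
Hypothesis Osize : forall i j : nat, (i < n)%N -> (j < n)%N ->
  seteq (simg s si i m0) (simg s si j m0) -> i = j.
Implicit Types (p q : R -> Prop).

Local Notation spow := (spow s si).
Local Notation simg := (simg s si).

Definition in_orbit p := exists r : nat, seteq p (iter r (simg 1) m0).

Lemma iter_simg1 k p x : iter k (simg 1) p x = p (iter k si x).
Proof. by elim: k x => // k IH x; rewrite iterS /= {1}/simg IH -iterSr. Qed.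

Lemma simg_nat (i : nat) p x : simg i p x = iter i (simg 1) p x.
Proof. by rewrite iter_simg1; case: i. Qed.

Lemma iter_si_n x : iter n si x = x.
Proof. by have := iter_can n si_s x; rewrite sn. Qed.

Lemma iter_si_mod k x : iter k si x = iter (k %% n) si x.
Proof.
rewrite {1}(divn_eq k n) iterD.
by elim: (k %/ n)%N => // q IH; rewrite mulSn iterD iter_si_n.
Qed.

Lemma spow_iter_si z : exists r, forall x, spow z x = iter r si x.
Proof.
case: z => [k|k]; last by exists k.+1.
have s_iter x : s x = iter n.-1 si x.
  by have := iter_si_n (s x); rewrite -(prednK n_gt0) iterSr s_si.
exists (k * n.-1)%N => x; elim: k => // k IH.
by rewrite /spow iterS -/(spow k x) IH s_iter -iterD mulSn.
Qed.

Lemma in_sorbit_in_orbit p : in_sorbit s si m0 p -> in_orbit p.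
Proof.
move=> [z E]; have [r Er] := spow_iter_si (- z).
by exists r => x; rewrite E iter_simg1 /simg Er.
Qed.

Lemma in_orbit_simg1 p : in_orbit p -> in_orbit (simg 1 p).
Proof. by move=> [r E]; exists r.+1 => x; apply: E. Qed.

Lemma in_orbit_mod p : in_orbit p -> exists2 r, (r < n)%N & seteq p (iter r (simg 1) m0).
Proof.
move=> [r E]; exists (r %% n)%N; first by rewrite ltn_mod.
by move=> x; rewrite E !iter_simg1 iter_si_mod.
Qed.

Lemma iter_simg1_add k r p :
  seteq (iter k (simg 1) (iter r (simg 1) p)) (iter ((k + r) %% n)%N (simg 1) p).
Proof. by move=> x; rewrite -iterD !iter_simg1 -iter_si_mod. Qed.

Lemma orbit_reach1 p q : in_orbit p -> in_orbit q ->
  exists2 K, (K < n)%N & seteq q (iter K (simg 1) p).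
Proof.
move=> /in_orbit_mod[r rn Ep] /in_orbit_mod[r' r'n Eq].
exists ((r' + (n - r)) %% n)%N; first by rewrite ltn_mod.
move=> x; rewrite Eq (iter_simg_seteq Ep) iter_simg1_add modnDml -addnA subnK ?(ltnW rn) //.
by rewrite modnDr modn_small.
Qed.

Lemma orbit_distinct1 p k : in_orbit p -> (0 < k)%N -> (k < n)%N ->
  ~ seteq (iter k (simg 1) p) p.
Proof.
move=> /in_orbit_mod[r rn Ep] k_gt0 kn E.
have : ((k + r) %% n)%N = r.
  apply: Osize; rewrite ?ltn_mod // => x; rewrite !simg_nat.
  by rewrite -iter_simg1_add -(iter_simg_seteq Ep) E Ep.
rewrite -{2}(modn_small rn) -[r in RHS]add0n => /eqP.
by rewrite eqn_modDr mod0n modn_small // => /eqP k0; rewrite k0 in k_gt0.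
Qed.

Lemma orbit_reach d p q : d = 1 \/ d = -1 -> in_orbit p -> in_orbit q ->
  exists2 K, (K < n)%N & seteq q (iter K (simg d) p).
Proof.
case=> -> pO qO; first exact: orbit_reach1.
have [K Kn Ep] := orbit_reach1 qO pO; exists K => // x.
have Kq := iter_simgK s_si si_s (-1) K q; rewrite opprK in Kq.
apply: iff_trans (iff_sym (Kq x)) _.
exact: iter_simg_seteq (fun y => iff_sym (Ep y)) x.
Qed.

Lemma orbit_distinct d p k : d = 1 \/ d = -1 -> in_orbit p -> (0 < k)%N -> (k < n)%N ->
  ~ seteq (iter k (simg d) p) p.
Proof.
case=> -> pO k_gt0 kn E; first exact: orbit_distinct1 pO k_gt0 kn E.
apply: (orbit_distinct1 pO k_gt0 kn) => x.
apply: iff_trans (iter_simgK s_si si_s 1 k p x).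
exact: iter_simg_seteq (fun y => iff_sym (E y)) x.
Qed.

Lemma supp_eq_orbit (M : zmodType) (rho : int -> R -> M -> M) m :
  maximal_ideal m -> in_orbit m -> (forall p, in_supp rho p -> in_sorbit s si m0 p) ->
  (forall p, in_orbit p -> exists v, wt rho p v /\ v != 0) ->
  forall p, in_supp rho p <-> in_sorbit s si m0 p.
Proof.
move=> mmax mO supp_orbit wt_orbit p; split=> [|pO']; first exact: supp_orbit.
have pO := in_sorbit_in_orbit pO'; split; last exact: wt_orbit.
have [K _ E] := orbit_reach1 mO pO.
exact: maximal_seteq (fun x => iff_sym (E x)) (iter_simg_maximal s_si si_s 1 K mmax).
Qed.

End Orbit.

Section Module.
Variables (R : comNzRingType) (s : {rmorphism R -> R}) (si : R -> R) (H J : R -> Prop).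
Hypotheses (s_si : cancel s si) (si_s : cancel si s).
Variables (M : zmodType) (rho : int -> R -> M -> M).
Hypothesis Mmod : is_BR_module s si H J rho.
Implicit Types (p q : R -> Prop) (u v w : M).

Local Notation Iz := (Iz s si H J).
Local Notation spow := (spow s si).
Local Notation simg := (simg s si).
Local Notation wt := (wt rho).

Lemma rho_vD z a v w : Iz z a -> rho z a (v + w) = rho z a v + rho z a w.
Proof. by case: Mmod => vD _ _ _; apply: vD. Qed.

Lemma rho_aD z a b v : Iz z a -> Iz z b -> rho z (a + b) v = rho z a v + rho z b v.
Proof. by case: Mmod => _ aD _ _; apply: aD. Qed.

Lemma rho01 v : rho 0 1 v = v.
Proof. by case: Mmod. Qed.

Lemma rho_rho y z a b v : Iz y a -> Iz z b ->
  rho y a (rho z b v) = rho (y + z) (a * spow y b) v.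
Proof. by case: Mmod => _ _ _ rr; apply: rr. Qed.

Lemma rho_v0 z a : Iz z a -> rho z a 0 = 0.
Proof. by move=> Ia; apply: (@addrI _ (rho z a 0)); rewrite -rho_vD // !addr0. Qed.

Lemma rho_0v z v : Iz z 0 -> rho z 0 v = 0.
Proof. by move=> I0; apply: (@addrI _ (rho z 0 v)); rewrite -rho_aD // !addr0. Qed.

Lemma rho0N v : rho 0 (-1) v = - v.
Proof. by apply: (@addrI _ v); rewrite subrr -{1}(rho01 v) -rho_aD // subrr rho_0v. Qed.

Lemma rho0M a b v : rho 0 a (rho 0 b v) = rho 0 (a * b) v.
Proof. by rewrite rho_rho. Qed.

Lemma rho0_rho r z a v : Iz z a -> rho 0 r (rho z a v) = rho z (r * a) v.
Proof. by move=> Ia; rewrite rho_rho // add0r. Qed.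

Lemma rho_rho0 z a r v : Iz z a -> rho z a (rho 0 r v) = rho z (a * spow z r) v.
Proof. by move=> Ia; rewrite rho_rho // addr0. Qed.

Lemma rho_lower_raise z h j u : Iz (- z) h -> Iz z j ->
  rho (- z) h (rho z j u) = rho 0 (h * spow (- z) j) u.
Proof. by move=> Ih Ij; rewrite rho_rho // addNr. Qed.

Lemma wt_seteq p q u : seteq p q -> wt p u -> wt q u.
Proof. by move=> pq wu r /pq; apply: wu. Qed.

Lemma wt_rho0 p r u : wt p u -> wt p (rho 0 r u).
Proof. by move=> wu c pc; rewrite rho0M mulrC -rho0M wu // rho_v0. Qed.

Lemma wt_rho z a p u : Iz z a -> wt p u -> wt (simg z p) (rho z a u).
Proof.
move=> Ia wu r pr; rewrite rho0_rho // mulrC -[r](spowK s_si si_s z).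
by rewrite -rho_rho0 // wu // rho_v0.
Qed.

(* [v] maps to zero in the localization of [M] at [p]. *)
Definition locally_zero p v := exists e, p (e - 1) /\ rho 0 e v = 0.

Lemma locally_zero0 p : is_ideal p -> locally_zero p 0.
Proof. by case=> p0 _ _; exists 1; rewrite subrr rho_v0. Qed.

Lemma locally_zeroD p v w : is_ideal p ->
  locally_zero p v -> locally_zero p w -> locally_zero p (v + w).
Proof.
move=> [_ pD pM] [e [pe ev]] [e' [pe' ev']]; exists (e * e'); split.
  have -> : e * e' - 1 = e * (e' - 1) + (e - 1) by ring.
  by apply: pD => //; apply: pM.
by rewrite rho_vD // {1}[e * e']mulrC -!rho0M ev ev' !rho_v0 ?addr0.
Qed.

Lemma locally_zero_rho0 p r v : locally_zero p v -> locally_zero p (rho 0 r v).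
Proof. by move=> [e [pe ev]]; exists e; rewrite rho0M mulrC -rho0M ev rho_v0. Qed.

Lemma locally_zero_wt p q u : maximal_ideal p -> maximal_ideal q -> ~ seteq q p ->
  wt q u -> locally_zero p u.
Proof.
move=> pmax qmax nqp wu.
have npq : ~ seteq p q by move=> E; apply: nqp => x; exact: iff_sym (E x).
have [a [b [pa qb ab]]] := maximal_comaximal pmax qmax npq.
exists b; rewrite wu //; split=> //.
have -> : b - 1 = - a by rewrite -ab; ring.
by case: pmax => pideal _ _; apply: idealN.
Qed.

Lemma locally_zero_rho0_wt p q c u : maximal_ideal p -> maximal_ideal q -> p c ->
  wt q u -> locally_zero p (rho 0 c u).
Proof.
move=> pmax qmax pc wu; have [qp|nqp] := classic (seteq q p).
  by rewrite wu ?qp //; case: pmax => pideal _ _; apply: locally_zero0.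
exact/locally_zero_rho0/(locally_zero_wt pmax qmax nqp).
Qed.

Lemma wt_locally_zero_eq0 p v : is_ideal p -> wt p v -> locally_zero p v -> v = 0.
Proof.
move=> pideal wv [e [pe ev]].
have p1e : p (1 - e) by rewrite -opprB; apply: idealN.
by rewrite -[v]rho01 -(subrK e 1) rho_aD // ev wv // addr0.
Qed.

Definition raises_at d p := exists j v, Iz d j /\ wt p v /\ rho d j v != 0.

Lemma raises_at_wt d p : raises_at d p -> exists v, wt p v /\ v != 0.
Proof.
move=> [j [v [Ij [wv nz]]]]; exists v; split=> //.
by apply: contraNneq nz => ->; rewrite rho_v0.
Qed.

Lemma H_break_raises_at m : H_break s si H rho m <-> raises_at (-1) (simg 1 m).
Proof.
split=> [[h [w [Hh [ww nz]]]]|[y [w [Hy [ww nz]]]]].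
  by exists (si h), w; rewrite /= si_s.
by exists (s y), w; rewrite s_si.
Qed.

Lemma rho_closed (S : M -> Prop) : S 0 -> (forall v w, S v -> S w -> S (v + w)) ->
  (forall r v, S v -> S (rho 0 r v)) ->
  (forall j v, Iz 1 j -> S v -> S (rho 1 j v)) ->
  (forall y v, Iz (-1) y -> S v -> S (rho (-1) y v)) ->
  forall z a v, Iz z a -> S v -> S (rho z a v).
Proof.
move=> S0 SD SR SJ SH.
have sums z A B : (forall x, idealprod A B x -> Iz z x) ->
    (forall a b v, A a -> B b -> S v -> S (rho z (a * b) v)) ->
    forall x v, idealprod A B x -> S v -> S (rho z x v).
  move=> AB_Iz Sab x v Ix Sv; move: x Ix; apply: idealprod_ind.
  - by rewrite rho_0v //; apply/AB_Iz/idealprod0.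
  - by move=> x y Ix Iy Sx Sy; rewrite rho_aD; [apply: SD | apply: AB_Iz..].
  - by move=> a b Aa Bb; apply: Sab.
case=> [[|k]|k]; first by move=> a v _; apply: SR.
  elim: k => [|k IH]; first exact: SJ.
  apply: sums => // x y v Ix Jy Sv.
  have -> : rho k.+2 (x * y) v = rho k.+1 x (rho 1 (iter k.+1 si y) v).
    by rewrite rho_rho // /spow iter_can // addrC -intS.
  exact/IH/SJ.
elim: k => [|k IH]; first exact: SH.
apply: sums => // x y v Ix Hy Sv.
have -> : rho (Negz k.+1) (x * y) v = rho (Negz k) x (rho (-1) (iter k.+1 s y) v).
  by rewrite rho_rho // /spow iter_can //; congr rho; rewrite !NegzE; lia.
exact/IH/SH.
Qed.

(* Raising by [t^d] starting from the weight [base]: [d = 1, base = m] for [J]-breaks and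
   [d = -1, base = sigma(m)] for [H]-breaks. *)
Section Chains.
Hypotheses (HH : is_ideal H) (HJ : is_ideal J) (Msimple : simple_module s si H J rho).
Variables (d : int) (base : R -> Prop).
Hypotheses (d_unit : d = 1 \/ d = -1) (base_max : maximal_ideal base).
Hypothesis base_absorbs : forall h j,
  Iz (- d) h -> Iz d j -> base (h * spow (- d) j).
Local Notation orb k := (iter k (simg d) base).

Lemma Iz_unit_mul r j : Iz d j -> Iz d (r * j).
Proof.
case: d_unit => ->; first by case: HJ => _ _; apply.
by case: HH => _ _ HM Hj; rewrite /= rmorphM; apply: HM.
Qed.

Lemma orb_maximal k : maximal_ideal (orb k).
Proof. exact: iter_simg_maximal. Qed.

Inductive chain : nat -> M -> Prop :=
| chain0 v : wt base v -> chain 0 v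
| chainS k j u : Iz d j -> chain k u -> chain k.+1 (rho d j u).

Lemma chainSP k u : chain k.+1 u -> exists j u', [/\ Iz d j, chain k u' & u = rho d j u'].
Proof. by move e : k.+1 => k' cu; case: cu e => // k0 j u' Ij cu' [->]; exists j, u'. Qed.

Lemma chain_wt k u : chain k u -> wt (orb k) u.
Proof. by elim=> [//|k' j u' Ij _]; apply: wt_rho. Qed.

Lemma chain_rho0 r k u : chain k u -> chain k (rho 0 r u).
Proof.
case=> [v wv|{}k j {}u Ij cu]; first by apply/chain0/wt_rho0.
by rewrite rho0_rho //; apply/chainS/cu/Iz_unit_mul.
Qed.

Inductive chain_span : M -> Prop :=
| chain_span0 : chain_span 0
| chain_spanS k u : chain k.+1 u -> chain_span u
| chain_spanD u w : chain_span u -> chain_span w -> chain_span (u + w).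

Lemma chain_span_rho0 r u : chain_span u -> chain_span (rho 0 r u).
Proof.
elim=> [|k {}u cu|{}u w _ IHu _ IHw].
- by rewrite rho_v0 //; apply: chain_span0.
- exact/chain_spanS/chain_rho0/cu.
- by rewrite rho_vD //; apply: chain_spanD.
Qed.

Lemma chain_span_raise j u : Iz d j -> chain_span u -> chain_span (rho d j u).
Proof.
move=> Ij; elim=> [|k {}u cu|{}u w _ IHu _ IHw].
- by rewrite rho_v0 //; apply: chain_span0.
- exact/chain_spanS/chainS/cu.
- by rewrite rho_vD //; apply: chain_spanD.
Qed.

Lemma chain_span_lower h u : Iz (- d) h -> chain_span u -> chain_span (rho (- d) h u).
Proof.
move=> Ih; elim=> [|k {}u cu|{}u w _ IHu _ IHw].
- by rewrite rho_v0 //; apply: chain_span0.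
- have [j [u' [Ij cu' ->]]] := chainSP cu; rewrite rho_lower_raise //.
  case: k cu' {cu} => [|k] cu'; last exact/chain_spanS/chain_rho0/cu'.
  by rewrite (chain_wt cu'); [apply: chain_span0 | apply: base_absorbs].
- by rewrite rho_vD //; apply: chain_spanD.
Qed.

Lemma chain_span_submodule : submodule s si H J rho chain_span.
Proof.
have [up down] : (forall j v, Iz 1 j -> chain_span v -> chain_span (rho 1 j v)) /\
                 (forall y v, Iz (-1) y -> chain_span v -> chain_span (rho (-1) y v)).
  case: d_unit chain_span_raise chain_span_lower => -> raise lower; first by [].
  by rewrite opprK in lower.
split; [exact: chain_span0 | exact: chain_spanD | |].
  by move=> v Sv; rewrite -rho0N //; apply: chain_span_rho0.
move=> z a v Ia Sv; apply: rho_closed Ia Sv;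
  [exact: chain_span0 | exact: chain_spanD | exact: chain_span_rho0 | exact: up | exact: down].
Qed.

Lemma chain_span_all : raises_at d base -> forall v, chain_span v.
Proof.
move=> [j [v [Ij [wv nz]]]].
case: Msimple => _ /(_ chain_span chain_span_submodule) [span_eq0|//].
by move: nz; rewrite (span_eq0 _ (chain_spanS (chainS Ij (chain0 wv)))) eqxx.
Qed.

(* Lowering a chain [(jt^d)u] gives [c u] with [c] in [base]: zero if [u] has weight [base],
   and locally zero at [base] otherwise. *)
Lemma lower_orb1_eq0 h w : raises_at d base -> Iz (- d) h -> wt (orb 1) w ->
  rho (- d) h w = 0.
Proof.
move=> up Ih ww; have base_ideal : is_ideal base by case: base_max.
have loc u : chain_span u -> locally_zero base (rho (- d) h u).
  elim=> [|k {}u cu|{}u u' _ IHu _ IHu'].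
  - by rewrite rho_v0 //; apply: locally_zero0.
  - have [j [u' [Ij cu' ->]]] := chainSP cu; rewrite rho_lower_raise //.
    have base_c := base_absorbs Ih Ij.
    exact: locally_zero_rho0_wt base_max (orb_maximal k) base_c (chain_wt cu').
  - by rewrite rho_vD //; apply: locally_zeroD.
apply: wt_locally_zero_eq0 base_ideal _ (loc w (chain_span_all up w)).
exact: wt_seteq (simgNK s_si si_s d base) (wt_rho Ih ww).
Qed.

Lemma chain_eq0_from L k u : (forall u, chain L u -> u = 0) ->
  chain k u -> (L <= k)%N -> u = 0.
Proof.
move=> chainL_eq0; elim=> [v wv|{}k j {}u Ij cu IH] Lk.
  by apply: chainL_eq0; move: Lk; rewrite leqn0 => /eqP->; apply: chain0.
have [kL|Lk'] := ltnP k L; last by rewrite IH // rho_v0.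
have eL : L = k.+1 by lia.
by apply: chainL_eq0; rewrite eL; apply: chainS.
Qed.

(* Otherwise [M] is spanned by chains of length [< L], whose weights all differ from
   [base], so every weight vector of weight [base] is locally zero at [base]. *)
Lemma chain_nonzero L : raises_at d base ->
  (forall k, (0 < k)%N -> (k < L)%N -> ~ seteq (orb k) base) ->
  exists2 u, chain L u & u != 0.
Proof.
move=> up distinct; apply: NNPP => nochain.
have base_ideal : is_ideal base by case: base_max.
have chainL_eq0 u : chain L u -> u = 0.
  by move=> cu; apply/eqP/negPn/negP => nz; apply: nochain; exists u.
have loc u : chain_span u -> locally_zero base u.
  elim=> [|k {}u cu|{}u w _ IHu _ IHw]; [exact: locally_zero0 | | exact: locally_zeroD].
  have [kL|Lk] := ltnP k.+1 L.
    exact: locally_zero_wt base_max (orb_maximal _) (distinct _ (ltn0Sn k) kL) (chain_wt cu).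
  by rewrite (chain_eq0_from chainL_eq0 cu Lk); apply: locally_zero0.
have [j [v [Ij [wv nz]]]] := up.
have v0 := wt_locally_zero_eq0 base_ideal wv (loc v (chain_span_all up v)).
by move: nz; rewrite v0 rho_v0 ?eqxx.
Qed.

Variables (n : nat) (m0 : R -> Prop).
Hypotheses (n_gt0 : (0 < n)%N) (sn : forall x, iter n s x = x).
Hypothesis Osize : forall i j : nat, (i < n)%N -> (j < n)%N ->
  seteq (simg i m0) (simg j m0) -> i = j.
Hypotheses (base_orbit : in_orbit s si m0 base) (up : raises_at d base).

Lemma raises_on_orbit p : in_orbit s si m0 p -> raises_at d p.
Proof.
move=> pO; have [K Kn E] := orbit_reach s_si si_s n_gt0 sn d_unit base_orbit pO.
have [u cu nz] : exists2 u, chain K.+1 u & u != 0.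
  apply: chain_nonzero up _ => k k_gt0 kK.
  by apply: (orbit_distinct s_si si_s n_gt0 sn Osize d_unit base_orbit k_gt0); lia.
have [j [u' [Ij cu' eu]]] := chainSP cu; rewrite eu in nz.
exists j, u'; split=> //; split=> //.
exact: wt_seteq (fun x => iff_sym (E x)) (chain_wt cu').
Qed.

End Chains.

End Module.
Theorem lemma3p17
  (k : fieldType) (R : comAlgType k)
  (Rdom : forall x y : R, x * y = 0 -> x = 0 \/ y = 0)
  (s : {rmorphism R -> R}) (si : R -> R)
  (s_lin : forall (c : k) (x : R), s (c *: x) = c *: s x)
  (s_si : cancel s si) (si_s : cancel si s)
  (H J : R -> Prop) (HH : is_ideal H) (HJ : is_ideal J)
  (Inz : forall z : int, exists x, Iz s si H J z x /\ x != 0)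
  (n : nat) (n_gt0 : (0 < n)%N) (sn : forall x : R, iter n s x = x)
  (m0 : R -> Prop) (m0max : maximal_ideal m0)
  (Osize : forall i j : nat, (i < n)%N -> (j < n)%N ->
           seteq (simg s si i m0) (simg s si j m0) -> i = j)
  (Obreak : exists m' : R -> Prop, in_sorbit s si m0 m' /\ is_break s si H J m')
  (M : zmodType) (rho : int -> R -> M -> M)
  (Mmod : is_BR_module s si H J rho)
  (Msimple : simple_module s si H J rho)
  (Mweight : weight_module rho)
  (Msupp : forall m, in_supp rho m -> in_sorbit s si m0 m)
  (m : R -> Prop) (mO : in_sorbit s si m0 m) (mbreak : is_break s si H J m) :
  ~ (J_break J rho m /\ H_break s si H rho m) /\
  (J_break J rho m ->
     (forall m', in_sorbit s si m0 m' -> is_break s si H J m' -> J_break J rho m') /\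
     (forall m', in_supp rho m' <-> in_sorbit s si m0 m')) /\
  (H_break s si H rho m ->
     (forall m', in_sorbit s si m0 m' -> is_break s si H J m' -> H_break s si H rho m') /\
     (forall m', in_supp rho m' <-> in_sorbit s si m0 m')).
Proof.
have mmax : maximal_ideal m by case: mbreak.
have orbitP := in_sorbit_in_orbit s_si si_s n_gt0 sn (m0 := m0).
have mO' := orbitP _ mO.
have suppE d (up : forall p, in_orbit s si m0 p -> raises_at s si H J rho d p) :=
  supp_eq_orbit s_si si_s n_gt0 sn mmax mO' Msupp (fun p pO => raises_at_wt Mmod (up p pO)).
have HbreakP := @H_break_raises_at _ s si H J s_si si_s _ rho.
have J_dir : (1 : int) = 1 \/ (1 : int) = -1 by left.
have J_absorbs := break_absorbs_raise s_si si_s mbreak.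
have J_orbit := raises_on_orbit s_si si_s Mmod HH HJ Msimple J_dir mmax J_absorbs
  n_gt0 sn Osize mO'.
have H_dir : (-1 : int) = 1 \/ (-1 : int) = -1 by right.
have H_absorbs := break_absorbs_lower mbreak.
have H_orbit := raises_on_orbit s_si si_s Mmod HH HJ Msimple H_dir
  (simg_maximal s_si si_s 1 mmax) H_absorbs n_gt0 sn Osize (in_orbit_simg1 mO').
split.
  move=> [upm /HbreakP [y [w [Hy [ww nz]]]]]; move: nz.
  by rewrite (lower_orb1_eq0 s_si si_s Mmod HH HJ Msimple J_dir mmax J_absorbs upm Hy ww) eqxx.
(* Every point of the orbit turns out to be a J-break (resp. H-break). *)
split=> [upm | /HbreakP upm].
  by split=> [m' m'O _|]; [apply: J_orbit upm _ (orbitP _ m'O) | apply: suppE (J_orbit upm)].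
split=> [m' m'O _|]; last exact: suppE (H_orbit upm).
exact/HbreakP/(H_orbit upm)/in_orbit_simg1/orbitP.
Qed.
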